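(* The linear space $L^{(d-1)}$ is a relative $W_d(\mathbb C)$-section for the action of $O_d(\mathbb C)$ on $V$. More precisely, there exist rational invariants $f_1,\dots,f_d\in\mathbb C(V)^{O_d(\mathbb C)}$ such that, setting $$U_d(\mathbb C)=\Big\{(v,M)\in V:\ (v,M)\text{ is in the domain of each }f_k\text{ and }\prod_{k=1}^df_k(v,M)\neq0\Big\},$$ which is an invariant non-empty Zariski-open subset of $V$, the space $L^{(d-1)}$ intersects each orbit contained in $U_d(\mathbb C)$. Furthermore: $f_1=c_1^2+\dots+c_d^2$; $f_i|_{L^{(i-1)}}=c_{1(d-i+2)}^2+\dots+c_{(d-i+1)(d-i+2)}^2$ for $2\le i<d$; and $f_d|_{L^{(d-1)}}=c_{12}^2$.
   Context: Fix $d\ge2$. $V=\mathbb C^d\oplus\mathfrak{so}(d,\mathbb C)$ has elements $(v,M)$ with $v=(c_1,\dots,c_d)^\top$ and $M$ complex skew-symmetric with $M_{ij}=c_{ij}=-M_{ji}$ for $i<j$. $O_d(\mathbb C)=\{A\in\mathbb C^{d\times d}:AA^\top=I\}$ acts by $A\cdot(v,M)=(Av,AMA^\top)$. $L^{(1)}=\{(v,M):c_1=\dots=c_{d-1}=0\}$ and for $2\le i\le d-1$, $L^{(i)}=\{(v,M)\in L^{(i-1)}:c_{k(d-i+2)}=0,\ 1\le k\le d-i\}$; so $L^{(d-1)}$ consists of $(v,M)$ with $v=(0,\dots,0,c_d)$ and only $c_{12},c_{23},\dots,c_{(d-1)d}$ possibly nonzero in $M$. $W_d(\mathbb C)\subset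 O_d(\mathbb C)$ is the group of diagonal matrices with diagonal entries in $\{-1,1\}$. For a subgroup $N\subset G$ of a group acting rationally on a variety $X$, a subvariety $S\subset X$ is a relative $N$-section if there is a non-empty, $G$-invariant, Zariski-open $U\subset X$ such that $S$ intersects each orbit contained in $U$, and $N=\{n\in G:nS=S\}$. $\mathbb C(V)^{O_d(\mathbb C)}$ denotes the field of $O_d(\mathbb C)$-invariant rational functions on $V$. *)

From mathcomp Require Import all_boot all_algebra.
From mathcomp Require Import complex.
From mathcomp Require Import Rstruct.

Set Implicit Arguments.
Unset Strict Implicit.
Unset Printing Implicit Defensive.
Import GRing.Theory Num.Theory.
Local Open Scope ring_scope.

Definition C : numClosedFieldType := (Rdefinitions.R)[i].

(* Ambient type of pairs (v, M); points of V = C^d (+) so(d,C) are those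
   with M skew-symmetric. *)
Definition Vpt (d : nat) : Type := ('cV[C]_d * 'M[C]_d)%type.
Definition inV d (x : Vpt d) : Prop := x.2^T = - x.2.

(* 1-based coordinates c_i and c_{ij} (0 when the index is out of range). *)
Definition cv d (x : Vpt d) (i : nat) : C :=
  match @insub nat (fun k => k < d)%N _ i.-1 with
  | Some i' => x.1 i' 0 | None => 0 end.
Definition cM d (x : Vpt d) (i j : nat) : C :=
  match @insub nat (fun k => k < d)%N _ i.-1,
        @insub nat (fun k => k < d)%N _ j.-1 with
  | Some i', Some j' => x.2 i' j' | _, _ => 0 end.

Definition orth d (A : 'M[C]_d) : Prop := A *m A^T = 1%:M.
Definition act d (A : 'M[C]_d) (x : Vpt d) : Vpt d := (A *m x.1, A *m x.2 *m A^T).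

Definition inW d (A : 'M[C]_d) : Prop :=
  (forall i j : 'I_d, i != j -> A i j = 0) /\ (forall i : 'I_d, A i i = 1 \/ A i i = -1).

Inductive polyfun d : (Vpt d -> C) -> Prop :=
| pf_const (a : C) : polyfun (fun _ => a)
| pf_v (i : 'I_d) : polyfun (fun x => x.1 i 0)
| pf_M (i j : 'I_d) : (i < j)%N -> polyfun (fun x => x.2 i j)
| pf_add f g : polyfun f -> polyfun g -> polyfun (fun x => f x + g x)
| pf_mul f g : polyfun f -> polyfun g -> polyfun (fun x => f x * g x).

(* A rational function on V is represented by a fraction p/q of polynomial
   functions with q not identically zero on V. *)
Definition ratrep d (p q : Vpt d -> C) : Prop :=
  polyfun p /\ polyfun q /\ exists x, inV x /\ q x != 0.

Definition rateq d (p q p' q' : Vpt d -> C) : Prop :=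
  forall x, inV x -> p x * q' x = p' x * q x.

Definition rat_val d (p q : Vpt d -> C) (x : Vpt d) (y : C) : Prop :=
  exists p' q', ratrep p' q' /\ rateq p q p' q' /\ q' x != 0 /\ y = p' x / q' x.
Definition in_dom d (p q : Vpt d -> C) (x : Vpt d) : Prop := exists y, rat_val p q x y.

Definition rat_invariant d (p q : Vpt d -> C) : Prop :=
  forall A, orth A -> forall x, inV x -> p (act A x) * q x = p x * q (act A x).

Definition zariski_open d (U : Vpt d -> Prop) : Prop :=
  exists F : (Vpt d -> C) -> Prop, (forall h, F h -> polyfun h) /\
    forall x, inV x -> (U x <-> exists h, F h /\ h x != 0).

Definition O_invariant d (U : Vpt d -> Prop) : Prop :=
  forall A x, orth A -> inV x -> U x -> U (act A x).

(* S (a subset of V) is a relative N-section w.r.t. the open set U: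
   S meets every orbit contained in U, and N = {A in O_d : A S = S}. *)
Definition relative_section d (U S : Vpt d -> Prop) (N : 'M[C]_d -> Prop) : Prop :=
  (forall x, inV x -> (forall A, orth A -> U (act A x)) ->
     exists A, orth A /\ S (act A x)) /\
  (forall A, orth A ->
     ((forall x, inV x -> S x -> S (act A x)) /\
      (forall y, inV y -> S y -> exists x, inV x /\ S x /\ act A x = y))
     <-> N A).

Fixpoint Lsp d (i : nat) (x : Vpt d) : Prop :=
  match i with
  | 0 => True
  | 1 => forall j, (1 <= j <= d - 1)%N -> cv x j = 0
  | i'.+1 => Lsp i' x /\ forall k, (1 <= k <= d - i)%N -> cM x k (d - i + 2) = 0
  end.

From mathcomp Require Import all_boot all_algebra.
From mathcomp Require Import complex Rstruct zify ring.
From Stdlib Require Import FunctionalExtensionality.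
Import GRing.Theory Num.Theory.
Local Open Scope ring_scope.
Set Implicit Arguments. Unset Strict Implicit. Unset Printing Implicit Defensive.

(* The invariants are f_k = |u_k|^2 / |u_(k-1)|^2 for the Lanczos vectors of
   the skew matrix M started at v: u_0 = 0, u_1 = v and
   u_(k+1) = M u_k + f_k u_(k-1).  The recursion is O_d-equivariant, so each
   f_k is invariant.  On L^(k-1) the vector u_j is a multiple of e_(d-j+1) for
   j < k, and f_k is the squared norm of the part of column d-k+2 of M above
   the diagonal; when it is nonzero, a Householder reflection fixing
   e_(d-k+2), ..., e_d moves that part onto a multiple of e_(d-k+1) and so
   brings the point into L^k.  Starting from f_1 = |v|^2, every point of U_d is
   thus moved into L^(d-1).  An orthogonal matrix preserving L^(d-1) maps each
   e_j to +-e_j, column by column from the last one. *)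

Lemma nat_choice (T : Type) (R : nat -> T -> Prop) (t0 : T) m :
  (forall k, (k < m)%N -> exists t, R k t) -> exists f : nat -> T, forall k, (k < m)%N -> R k (f k).
Proof.
elim: m => [|m IH] h; first by exists (fun _ => t0).
have [f hf] := IH (fun k hk => h k (ltnW hk)); have [t ht] := h m (ltnSn m).
exists (fun k => if k == m then t else f k) => k; rewrite ltnS leq_eqVlt.
by case: eqP => [->|_] //= /hf.
Qed.

Lemma prod_index_iota_neq0 (R : idomainType) (y : nat -> R) m n :
  \prod_(m <= k < n) y k != 0 <-> forall k, (m <= k < n)%N -> y k != 0.
Proof.
rewrite prodf_seq_neq0; split.
  by move=> /allP h k hk; have := h k; rewrite mem_index_iota => /(_ hk).
by move=> h; apply/allP => k; rewrite mem_index_iota => /h.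
Qed.

Lemma poly_eq0_of_horner (R : numDomainType) (p : {poly R}) :
  (forall t, p.[t] = 0) -> p = 0.
Proof.
move=> h; apply: (@roots_geq_poly_eq0 _ _ [seq i%:R | i <- iota 0 (size p)]).
- by apply/allP => t _; rewrite /root h.
- by rewrite map_inj_uniq ?iota_uniq // => i j /eqP; rewrite eqr_nat => /eqP.
- by rewrite size_map size_iota.
Qed.

Section Dot.
Variables (R : comPzRingType) (n : nat).
Implicit Types (u v w : 'cV[R]_n).

Definition dot u v : R := \sum_i u i 0 * v i 0.

Lemma dotE u v : dot u v = (u^T *m v) 0 0.
Proof. by rewrite mxE; apply: eq_bigr => i _; rewrite mxE. Qed.

Lemma dotC u v : dot u v = dot v u.
Proof. by apply: eq_bigr => i _; rewrite mulrC. Qed.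

Lemma dotBl u v w : dot (u - v) w = dot u w - dot v w.
Proof. by rewrite /dot -sumrB; apply: eq_bigr => i _; rewrite !mxE mulrBl. Qed.

Lemma dotZl a u v : dot (a *: u) v = a * dot u v.
Proof. by rewrite /dot mulr_sumr; apply: eq_bigr => i _; rewrite !mxE mulrA. Qed.

Lemma dotZr a u v : dot u (a *: v) = a * dot u v.
Proof. by rewrite dotC dotZl dotC. Qed.

Lemma trmx_mul_dot u v : u^T *m v = (dot u v)%:M.
Proof. by apply/matrixP => i j; rewrite (ord1 i) (ord1 j) dotE !mxE /= mulr1n. Qed.

Lemma dot_orth (A : 'M[R]_n) u v : A^T *m A = 1%:M -> dot (A *m u) (A *m v) = dot u v.
Proof. by move=> h; rewrite !dotE trmx_mul -mulmxA (mulmxA A^T) h mul1mx. Qed.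

Definition ev (k : nat) : 'cV[R]_n := \col_(i < n) (i == k :> nat)%:R.

Lemma ev_out k : (n <= k)%N -> ev k = 0.
Proof.
move=> h; apply/matrixP => i j; rewrite !mxE.
by rewrite (_ : (i == k :> nat) = false) //; apply/negbTE; rewrite neq_ltn (leq_trans (ltn_ord i) h).
Qed.

Lemma sum_delta (F : 'I_n -> R) (c : 'I_n) : \sum_j F j * (j == c)%:R = F c.
Proof.
rewrite (bigD1 c) //= eqxx mulr1 big1 ?addr0 // => j hj.
by rewrite (negbTE hj) mulr0.
Qed.

Lemma dot_ev (c : 'I_n) : dot (ev c) (ev c) = 1.
Proof.
rewrite /dot (eq_bigr (fun i => ev c i 0 * (i == c)%:R)) => [|i _].
  by rewrite sum_delta mxE eqxx.
by rewrite [X in _ * X]mxE.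
Qed.

Lemma mul_ev m (M : 'M[R]_(m, n)) (c : 'I_n) r : (M *m ev c) r 0 = M r c.
Proof. by rewrite mxE -[RHS](sum_delta (M r)); apply: eq_bigr => j _; rewrite mxE. Qed.

Lemma orth_col_dot (A : 'M[R]_n) (i j : 'I_n) :
  A^T *m A = 1%:M -> \sum_l A l i * A l j = (i == j)%:R.
Proof.
move=> hA; have := congr1 (fun M : 'M[R]_n => M i j) hA; rewrite !mxE => <-.
by apply: eq_bigr => l _; rewrite mxE.
Qed.

Lemma conj_delta_mx (A : 'M[R]_n) (i j r c : 'I_n) :
  (A *m delta_mx i j *m A^T) r c = A r i * A c j.
Proof.
rewrite mxE (eq_bigr (fun m => A r i * A c m * (m == j)%:R)) ?sum_delta // => m _.
rewrite !mxE (eq_bigr (fun l => A r l * (m == j)%:R * (l == i)%:R)) => [|l _].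
  by rewrite sum_delta; ring.
by rewrite mxE -mulrA -natrM mulnb andbC.
Qed.

Lemma mul_id_tail_mx (H : 'M[R]_n) m (v : 'cV[R]_n) :
  (forall r k : 'I_n, (m <= k)%N -> H r k = (r == k)%:R) ->
  (forall k : 'I_n, (k < m)%N -> v k 0 = 0) -> H *m v = v.
Proof.
move=> hH hv; apply/matrixP => r z; rewrite (ord1 z).
rewrite -{2}(mul1mx v) !mxE; apply: eq_bigr => k _.
case: (ltnP k m) => hk; first by rewrite hv // !mulr0.
by rewrite hH // mxE.
Qed.

Lemma mul_mx_id_tail (H M : 'M[R]_n) m r (c : 'I_n) :
  (forall r k : 'I_n, (m <= k)%N -> H r k = (r == k)%:R) -> (m <= c)%N -> (M *m H) r c = M r c.
Proof.
move=> hH hc; rewrite mxE (eq_bigr (fun l => M r l * (l == c)%:R)) ?sum_delta //.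
by move=> l _; rewrite hH.
Qed.

End Dot.

Arguments ev {R n}.
Arguments dot_ev {R n}.

Section Householder.
Variables (R : numClosedFieldType) (n : nat).

(* C is not ordered, so instead of the usual sign rule we take
   lam = +-sqrt(u.u) with lam != u_(m-1); then w = u - lam e_(m-1) satisfies
   w.w = 2 lam (lam - u_(m-1)) != 0 and H = 1 - (2 / w.w) w w^T. *)
Lemma householder (m : nat) (u : 'cV[R]_n) : (0 < m)%N -> (m <= n)%N ->
  (forall k : 'I_n, (m <= k)%N -> u k 0 = 0) -> dot u u != 0 ->
  exists H lam, H^T = H /\ H *m H^T = 1%:M /\ H *m u = lam *: ev m.-1 /\
    (forall r k : 'I_n, (m <= k)%N -> H r k = (r == k)%:R).
Proof.
move=> hm0 hmn hu huu.
have hm1 : (m.-1 < n)%N by lia.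
set s := sqrtC (dot u u); set um := dot u (ev m.-1).
pose lam := if s == um then - s else s.
have hl2 : lam ^+ 2 = dot u u by rewrite /lam; case: ifP => _; rewrite ?sqrrN sqrtCK.
have hl0 : lam != 0 by apply/eqP => h; move: huu; rewrite -hl2 h expr0n eqxx.
have hlu : lam != um.
  rewrite /lam; case: (eqVneq s um) => [hs|hs] //; apply/eqP => h.
  have /eqP : s *+ 2 = 0 by rewrite mulr2n {1}hs -h addNr.
  rewrite mulrn_eq0 /= => /eqP s0.
  by move: huu; rewrite -(sqrtCK (dot u u)) -/s s0 expr0n eqxx.
pose w := u - lam *: ev m.-1.
have hee : dot (ev m.-1) (ev m.-1) = 1 :> R := dot_ev (Ordinal hm1).
have hwu : dot w u = lam * (lam - um).
  by rewrite dotBl dotZl (dotC _ u) -hl2 -/um; ring.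
have hww : dot w w = 2 * (lam * (lam - um)).
  rewrite {1}/w dotBl dotZl (dotC u w) hwu (dotC _ w) /w dotBl dotZl hee -/um; ring.
have hww0 : dot w w != 0 by rewrite hww !mulf_neq0 ?pnatr_eq0 ?subr_eq0.
pose g := 2 / dot w w.
have hg : g * dot w w = 2 by rewrite /g mulfVK.
pose H := 1%:M - g *: (w *m w^T).
have HT : H^T = H by rewrite /H linearB /= trmx1 linearZ /= trmx_mul trmxK.
exists H, lam; split=> //; split.
  rewrite HT /H mulmxBl mul1mx mulmxBr mulmx1 -!scalemxAl -!scalemxAr.
  rewrite !mulmxA -(mulmxA w) trmx_mul_dot mul_mx_scalar -!scalemxAl scalerA.
  by rewrite hg scaler_nat mulr2n scalerDr opprB addrK subrK.
split.
  rewrite /H mulmxBl mul1mx -scalemxAl -mulmxA trmx_mul_dot mul_mx_scalar scalerA.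
  have -> : g * dot w u = 1.
    by rewrite /g hwu hww; field; rewrite subr_eq0 hlu hl0.
  by rewrite scale1r /w opprB addrC subrK.
move=> r k hk; rewrite /H !mxE big_ord1 !mxE.
have -> : (k == m.-1 :> nat) = false by apply/negbTE/eqP; lia.
by rewrite (hu k hk) mulr0 subr0 mulr0 mulr0 subr0.
Qed.

End Householder.

Section Lanczos.
Variables (R : comPzRingType) (n : nat).
Implicit Types (A M : 'M[R]_n) (v : 'cV[R]_n).

(* A state stands for consecutive Lanczos vectors u_(k-1) = vprev / tprev and
   u_k = vcur / tcur, with nprev = vprev.vprev (initially u_0 = 0 and
   nprev = 1).  Keeping the denominators apart makes the recursion
   division-free, and lnum / lden = u_k.u_k / u_(k-1).u_(k-1). *)
Record lstate := LState { vprev : 'cV[R]_n; tprev : R; nprev : R; vcur : 'cV[R]_n; tcur : R }.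

Definition lstep M (s : lstate) : lstate :=
  LState (vcur s) (tcur s) (dot (vcur s) (vcur s))
    ((tcur s * nprev s) *: (M *m vcur s) + (tprev s * dot (vcur s) (vcur s)) *: vprev s)
    (tcur s ^+ 2 * nprev s).

Definition lanczos M v k := iter k (lstep M) (LState 0 1 1 v 1).

Definition lnum (s : lstate) := dot (vcur s) (vcur s) * tprev s ^+ 2.
Definition lden (s : lstate) := tcur s ^+ 2 * nprev s.

Definition act_state A (s : lstate) :=
  LState (A *m vprev s) (tprev s) (nprev s) (A *m vcur s) (tcur s).

Lemma lstep_act A M s : A^T *m A = 1%:M ->
  lstep (A *m M *m A^T) (act_state A s) = act_state A (lstep M s).
Proof.
move=> hA; rewrite /lstep /act_state /= dot_orth // mulmxDr -!scalemxAr.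
by rewrite -!mulmxA (mulmxA A^T) hA mul1mx.
Qed.

Lemma lanczos_act A M v k : A^T *m A = 1%:M ->
  lanczos (A *m M *m A^T) (A *m v) k = act_state A (lanczos M v k).
Proof.
move=> hA; elim: k => [|k IH]; first by rewrite /lanczos /= /act_state mulmx0.
by rewrite /lanczos !iterS -!/(lanczos _ _ k) IH lstep_act.
Qed.

Lemma lnum_act A s : A^T *m A = 1%:M -> lnum (act_state A s) = lnum s.
Proof. by move=> hA; rewrite /lnum /= dot_orth. Qed.

End Lanczos.

Section PolynomialFunctions.
Variable d : nat.
Implicit Types (f g h : Vpt d -> C) (x : Vpt d).

Lemma polyfun_ext f g : f =1 g -> polyfun f -> polyfun g.
Proof. by move=> /functional_extensionality ->. Qed.

Lemma polyfun_opp f : polyfun f -> polyfun (fun x => - f x).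
Proof.
move=> hf; apply: (@polyfun_ext (fun x => -1 * f x)) => [x|]; first by rewrite mulN1r.
by apply: pf_mul => //; apply: pf_const.
Qed.

Lemma polyfun_sub f g : polyfun f -> polyfun g -> polyfun (fun x => f x - g x).
Proof. by move=> hf hg; apply: pf_add => //; apply: polyfun_opp. Qed.

Lemma polyfun_sum (I : Type) (r : seq I) (F : I -> Vpt d -> C) :
  (forall i, polyfun (F i)) -> polyfun (fun x => \sum_(i <- r) F i x).
Proof.
move=> hF; elim: r => [|i r IH].
  by apply: (@polyfun_ext (fun _ => 0)) => [x|]; [rewrite big_nil | apply: pf_const].
by apply: (@polyfun_ext (fun x => F i x + \sum_(j <- r) F j x)) => [x|];
  [rewrite big_cons | apply: pf_add].
Qed.

Lemma polyfun_prod (I : eqType) (r : seq I) (F : I -> Vpt d -> C) :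
  (forall i, i \in r -> polyfun (F i)) -> polyfun (fun x => \prod_(i <- r) F i x).
Proof.
elim: r => [|i r IH] hF.
  by apply: (@polyfun_ext (fun _ => 1)) => [x|]; [rewrite big_nil | apply: pf_const].
apply: (@polyfun_ext (fun x => F i x * \prod_(j <- r) F j x)) => [x|]; first by rewrite big_cons.
by apply: pf_mul; [apply: hF; rewrite mem_head | apply: IH => j hj; apply: hF; rewrite in_cons hj orbT].
Qed.

Lemma polyfun_exp f m : polyfun f -> polyfun (fun x => f x ^+ m).
Proof.
move=> hf; elim: m => [|m IH].
  by apply: (@polyfun_ext (fun _ => 1)) => [x|]; [rewrite expr0 | apply: pf_const].
by apply: (@polyfun_ext (fun x => f x * f x ^+ m)) => [x|]; [rewrite exprS | apply: pf_mul].
Qed.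

Definition polymx m n (F : Vpt d -> 'M[C]_(m, n)) := forall i j, polyfun (fun x => F x i j).

Lemma polymx_const m n (B : 'M[C]_(m, n)) : polymx (fun _ => B).
Proof. by move=> i j; apply: pf_const. Qed.

Lemma polymx_add m n (F G : Vpt d -> 'M[C]_(m, n)) :
  polymx F -> polymx G -> polymx (fun x => F x + G x).
Proof.
by move=> hF hG i j; apply: (@polyfun_ext (fun x => F x i j + G x i j)) => [x|];
  [rewrite mxE | apply: pf_add].
Qed.

Lemma polymx_scale m n f (F : Vpt d -> 'M[C]_(m, n)) :
  polyfun f -> polymx F -> polymx (fun x => f x *: F x).
Proof.
by move=> hf hF i j; apply: (@polyfun_ext (fun x => f x * F x i j)) => [x|];
  [rewrite mxE | apply: pf_mul].
Qed.

Lemma polymx_mul m n p (F : Vpt d -> 'M[C]_(m, n)) (G : Vpt d -> 'M[C]_(n, p)) :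
  polymx F -> polymx G -> polymx (fun x => F x *m G x).
Proof.
move=> hF hG i j; apply: (@polyfun_ext (fun x => \sum_k F x i k * G x k j)).
  by move=> x; rewrite mxE.
by apply: polyfun_sum => k; apply: pf_mul.
Qed.

Lemma polyfun_dot (F G : Vpt d -> 'cV[C]_d) :
  polymx F -> polymx G -> polyfun (fun x => dot (F x) (G x)).
Proof. by move=> hF hG; apply: polyfun_sum => i; apply: pf_mul. Qed.

Lemma polymx_vec : polymx (fun x => x.1).
Proof. by move=> i j; rewrite (ord1 j); apply: pf_v. Qed.

(* Polynomial functions only see the entries c_ij with i < j, so the matrix
   part of a point enters the invariants through its skew-symmetrisation. *)
Definition skew_upper (M : 'M[C]_d) : 'M[C]_d :=
  \matrix_(i, j) (if (i < j)%N then M i j else if (j < i)%N then - M j i else 0).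

Lemma polymx_skew_upper : polymx (fun x => skew_upper x.2).
Proof.
move=> i j; apply: (@polyfun_ext
  (fun x => if (i < j)%N then x.2 i j else if (j < i)%N then - x.2 j i else 0)).
  by move=> x; rewrite mxE.
case: ltnP => ij; first exact: pf_M.
by case: ltnP => ji; [apply: polyfun_opp; apply: pf_M | apply: pf_const].
Qed.

Lemma polyfun_comp f (phi : Vpt d -> Vpt d) :
  polyfun f -> polymx (fun x => (phi x).1) -> polymx (fun x => (phi x).2) ->
  polyfun (fun x => f (phi x)).
Proof.
move=> hf h1 h2; elim: hf => [a|i|i j _|f1 g1 _ IH1 _ IH2|f1 g1 _ IH1 _ IH2].
- exact: pf_const.
- exact: h1.
- exact: h2.
- exact: pf_add.
- exact: pf_mul.
Qed.

Definition line (a b : Vpt d) (t : C) : Vpt d :=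
  (a.1 + t *: (b.1 - a.1), a.2 + t *: (b.2 - a.2)).

Lemma line0 a b : line a b 0 = a.
Proof. by rewrite /line !scale0r !addr0; case: a. Qed.

Lemma line1 a b : line a b 1 = b.
Proof. by rewrite /line !scale1r ![a.1 + _]addrC ![a.2 + _]addrC !subrK; case: b. Qed.

Lemma polyfun_line f a b : polyfun f -> exists p : {poly C}, forall t, f (line a b t) = p.[t].
Proof.
elim=> [c|i|i j _|f1 g1 _ [p hp] _ [q hq]|f1 g1 _ [p hp] _ [q hq]].
- by exists c%:P => t; rewrite hornerC.
- exists ((a.1 i 0)%:P + 'X * (b.1 i 0 - a.1 i 0)%:P) => t.
  by rewrite /line /= !mxE hornerD hornerC hornerM hornerX hornerC.
- exists ((a.2 i j)%:P + 'X * (b.2 i j - a.2 i j)%:P) => t.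
  by rewrite /line /= !mxE hornerD hornerC hornerM hornerX hornerC.
- by exists (p + q) => t; rewrite hornerD hp hq.
- by exists (p * q) => t; rewrite hornerM hp hq.
Qed.

(* On the line through x0 and x, h g restricts to the zero polynomial and h
   to a nonzero one. *)
Lemma polyfun_vanish_line_closed (S : Vpt d -> Prop) g h :
  (forall a b t, S a -> S b -> S (line a b t)) -> polyfun g -> polyfun h ->
  (forall x, S x -> h x != 0 -> g x = 0) ->
  forall x0, S x0 -> h x0 != 0 -> forall x, S x -> g x = 0.
Proof.
move=> Sline pg ph hgh x0 S0 h0 x Sx.
have [G hG] := polyfun_line x0 x pg; have [H hH] := polyfun_line x0 x ph.
have HG0 : H * G = 0.
  apply: poly_eq0_of_horner => t; rewrite hornerM -hG -hH.
  have [->|hn] := eqVneq (h (line x0 x t)) 0; first by rewrite mul0r.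
  by rewrite hgh ?mulr0 //; apply: Sline.
have H0 : H != 0 by apply: contraNneq h0 => H0; rewrite -(line0 x0 x) hH H0 horner0.
move/eqP: HG0; rewrite mulf_eq0 (negbTE H0) /= => /eqP G0.
by rewrite -(line1 x0 x) hG G0 horner0.
Qed.

End PolynomialFunctions.

Arguments polymx_vec {d}.
Arguments polymx_skew_upper {d}.

Section Action.
Variable d : nat.
Implicit Types (x : Vpt d) (A B : 'M[C]_d).

Lemma inV_entry x : inV x -> forall i j, x.2 j i = - x.2 i j.
Proof. by move=> hV i j; have := congr1 (fun M : 'M[C]_d => M i j) hV; rewrite !mxE. Qed.

Lemma inV_entryP x : (forall i j, x.2 j i = - x.2 i j) -> inV x.
Proof. by move=> h; apply/matrixP => i j; rewrite !mxE h. Qed.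

Lemma inV_diag x i : inV x -> x.2 i i = 0.
Proof.
move=> hx; have /eqP := inV_entry hx i i.
by rewrite -addr_eq0 -mulr2n mulrn_eq0 /= => /eqP.
Qed.

Lemma skew_upper_id x : inV x -> skew_upper x.2 = x.2.
Proof.
move=> hx; apply/matrixP => i j; rewrite mxE.
case: ltnP => ij //; case: ltnP => ji; first by rewrite (inV_entry hx) opprK.
have -> : i = j by apply: val_inj; apply/eqP; rewrite eqn_leq ij ji.
by rewrite inV_diag.
Qed.

Lemma inV_line (a b : Vpt d) t : inV a -> inV b -> inV (line a b t).
Proof.
move=> ha hb; apply: inV_entryP => i j; rewrite /line /= !mxE.
by rewrite (inV_entry ha) (inV_entry hb); ring.
Qed.

Lemma inV_act A x : inV x -> inV (act A x).
Proof. by rewrite /inV /act /= => h; rewrite !trmx_mul trmxK h mulNmx mulmxN mulmxA. Qed.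

Lemma act1 x : act 1%:M x = x.
Proof. by rewrite /act trmx1 !mul1mx mulmx1; case: x. Qed.

Lemma act_mul A B x : act (A *m B) x = act A (act B x).
Proof. by rewrite /act /= trmx_mul !mulmxA. Qed.

Lemma orthT A : orth A -> A^T *m A = 1%:M.
Proof. exact: mulmx1C. Qed.

Lemma orth1 : orth (1%:M : 'M[C]_d).
Proof. by rewrite /orth trmx1 mulmx1. Qed.

Lemma orth_mul A B : orth A -> orth B -> orth (A *m B).
Proof. by rewrite /orth => hA hB; rewrite trmx_mul mulmxA -(mulmxA A) hB mulmx1. Qed.

Lemma act_orthK A x : orth A -> act A^T (act A x) = x.
Proof. by move=> hA; rewrite -act_mul orthT // act1. Qed.

Lemma act_orthKV A x : orth A -> act A (act A^T x) = x.
Proof. by move=> hA; rewrite -act_mul hA act1. Qed.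

End Action.

Arguments orth1 {d}.

Section Invariants.
Variable d : nat.
Implicit Types (x : Vpt d) (A : 'M[C]_d).

Definition fnum k x := lnum (lanczos (skew_upper x.2) x.1 k.-1).
Definition fden k x := lden (lanczos (skew_upper x.2) x.1 k.-1).

Definition polystate (F : Vpt d -> lstate C d) :=
  [/\ polymx (fun x => vprev (F x)), polyfun (fun x => tprev (F x)),
      polyfun (fun x => nprev (F x)), polymx (fun x => vcur (F x))
    & polyfun (fun x => tcur (F x))].

Lemma polystate_lstep (M : Vpt d -> 'M[C]_d) F :
  polymx M -> polystate F -> polystate (fun x => lstep (M x) (F x)).
Proof.
move=> hM [hp htp hnp hc htc]; split => //=.
- exact: polyfun_dot.
- apply: polymx_add; apply: polymx_scale => //.
  + exact: pf_mul.
  + exact: polymx_mul.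
  + by apply: pf_mul => //; apply: polyfun_dot.
- by apply: pf_mul => //; apply: polyfun_exp.
Qed.

Lemma polystate_lanczos k : polystate (fun x => lanczos (skew_upper x.2) x.1 k).
Proof.
elim: k => [|k IH]; first last.
  by have := polystate_lstep polymx_skew_upper IH.
by split; rewrite /=; [apply: polymx_const | apply: pf_const | apply: pf_const
  | apply: polymx_vec | apply: pf_const].
Qed.

Lemma polyfun_fnum k : polyfun (fnum k).
Proof.
have [_ htp _ hc _] := polystate_lanczos k.-1.
by apply: pf_mul; [apply: polyfun_dot | apply: polyfun_exp].
Qed.

Lemma polyfun_fden k : polyfun (fden k).
Proof.
have [_ _ hnp _ htc] := polystate_lanczos k.-1.
by apply: pf_mul => //; apply: polyfun_exp.
Qed.

Lemma fnum_act A x k : orth A -> inV x -> fnum k (act A x) = fnum k x.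
Proof.
move=> hA hx; rewrite /fnum (skew_upper_id (inV_act A hx)) (skew_upper_id hx).
by rewrite lanczos_act ?lnum_act ?orthT.
Qed.

Lemma fden_act A x k : orth A -> inV x -> fden k (act A x) = fden k x.
Proof.
move=> hA hx; rewrite /fden (skew_upper_id (inV_act A hx)) (skew_upper_id hx).
by rewrite lanczos_act ?orthT.
Qed.

End Invariants.

Arguments fnum : clear implicits.
Arguments fden : clear implicits.

Section RationalFunctions.
Variable d : nat.
Implicit Types (p q : Vpt d -> C) (x : Vpt d) (A : 'M[C]_d).

Lemma rat_valE p q x y : rat_val p q x y -> inV x -> q x != 0 -> y = p x / q x.
Proof. by move=> [p' [q' [_ [heq [hq' ->]]]]] hx hq; apply/eqP; rewrite eqr_div // heq. Qed.

Lemma rat_val_self p q x : ratrep p q -> q x != 0 -> rat_val p q x (p x / q x).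
Proof. by move=> hpq hq; exists p, q. Qed.

(* The representative is transported by z |-> A^T z, written through the
   skew-symmetrisation so that it stays a polynomial map. *)
Lemma rat_val_act p q A x y : orth A ->
  (forall z, inV z -> p (act A z) = p z /\ q (act A z) = q z) ->
  inV x -> rat_val p q x y -> rat_val p q (act A x) y.
Proof.
move=> hA hpq hx [p' [q' [[pp [pq [z0 [hz0 hqz0]]]] [heq [hq ->]]]]].
pose phi z := act A^T (z.1, skew_upper z.2).
have phiE z : inV z -> phi z = act A^T z by move=> hz; rewrite /phi skew_upper_id //; case: z {hz}.
have phiK z : inV z -> phi (act A z) = z.
  by move=> hz; rewrite phiE ?act_orthK //; apply: inV_act.
have p1 : polymx (fun z => (phi z).1) by apply: polymx_mul; [apply: polymx_const | apply: polymx_vec].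
have p2 : polymx (fun z => (phi z).2).
  by apply: polymx_mul; [apply: polymx_mul; [apply: polymx_const | apply: polymx_skew_upper] |
    apply: polymx_const].
exists (fun z => p' (phi z)), (fun z => q' (phi z)); split; last split; last by rewrite phiK.
  split; first exact: polyfun_comp.
  split; first exact: polyfun_comp.
  by exists (act A z0); rewrite phiK //; split => //; apply: inV_act.
move=> z hz; have hw : inV (act A^T z) by apply: inV_act.
have [e2 e3] := hpq _ hw; rewrite act_orthKV // in e2 e3.
by rewrite phiE // e2 e3; apply: heq.
Qed.

End RationalFunctions.

Section Band.
Variable d : nat.
Implicit Types (x : Vpt d).

Lemma cvE x (j : 'I_d) : cv x j.+1 = x.1 j 0.
Proof. by rewrite /cv /= valK. Qed.

Lemma cME x (r c : 'I_d) : cM x r.+1 c.+1 = x.2 r c.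
Proof. by rewrite /cM /= !valK. Qed.

Lemma cv_last x (hd : (d.-1 < d)%N) : cv x d = x.1 (Ordinal hd) 0.
Proof. by rewrite -cvE /= prednK //; lia. Qed.

(* Lband i is L^(i) read with 0-based indices: in the columns c > d - i only
   the entry just above the diagonal may be nonzero. *)
Definition Lband i x := (forall j : 'I_d, (j.+1 < d)%N -> x.1 j 0 = 0) /\
  (forall r c : 'I_d, (d - i < c)%N -> (r.+1 < c)%N -> x.2 r c = 0).

Lemma Lband_line i a b t : Lband i a -> Lband i b -> Lband i (line a b t).
Proof.
move=> [va Ma] [vb Mb]; split=> [j hj|r c hc hr]; rewrite /line /= !mxE.
  by rewrite va ?vb // subrr mulr0 addr0.
by rewrite Ma ?Mb // subrr mulr0 addr0.
Qed.

Lemma Lsp1E x : Lsp 1 x <-> forall j, (1 <= j <= d - 1)%N -> cv x j = 0.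
Proof. by []. Qed.

Lemma LspSE i x : (1 <= i)%N ->
  Lsp i.+1 x <-> Lsp i x /\ forall k, (1 <= k <= d - i.+1)%N -> cM x k (d - i.+1 + 2) = 0.
Proof. by case: i. Qed.

Lemma Lsp_Lband i x : (1 <= i)%N -> (i < d)%N -> Lsp i x <-> Lband i x.
Proof.
elim: i => [//|i IH] _ hid; case: (posnP i) => [->|hi].
  rewrite Lsp1E; split.
    move=> h; split => [j hj|r c hc]; last by have := ltn_ord c; lia.
    by rewrite -cvE h //; lia.
  move=> [hv _] j hj; have hj' : (j.-1 < d)%N by lia.
  by rewrite -[j](prednK (_ : 0 < j)%N) ?(cvE x (Ordinal hj')) ?hv //=; lia.
rewrite LspSE // (IH hi (ltnW hid)).
have hc : (d - i < d)%N by lia.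
have e2 : (d - i.+1 + 2)%N = (Ordinal hc).+1 by rewrite /=; lia.
split.
  move=> [[hv hM] hk]; split => // r c hc' hr.
  case: (ltngtP (d - i)%N c) => hc2.
  - by apply: hM => //; lia.
  - by move: hc' hc2; lia.
  - have -> : c = Ordinal hc by apply: val_inj.
    by have := hk r.+1; rewrite e2 cME; apply; move: hr; rewrite -hc2 /=; lia.
move=> [hv hM]; split; first by split=> // r c hc' hr; apply: hM => //; lia.
move=> k hk; rewrite e2; have hk' : (k.-1 < d)%N by lia.
rewrite -[k](prednK (_ : 0 < k)%N) ?(cME x (Ordinal hk')) ?hM //=; lia.
Qed.

(* The pivots c_d, c_((d-1)d), c_((d-2)(d-1)), ... are the entries that
   survive on L^(d-1); on L^(i) the j-th Lanczos vector is the product of the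
   first j pivots times e_(d-j+1). *)
Definition pivot x j := if j == 0%N then cv x d else cM x (d - j) (d - j).+1.
Definition pivot_prod x m := \prod_(j < m) pivot x j.

Lemma pivot_prodS x m : pivot_prod x m.+1 = pivot_prod x m * pivot x m.
Proof. by rewrite /pivot_prod big_ord_recr. Qed.

Lemma pivot_prod_neq0 x m : (forall j, (j < m)%N -> pivot x j != 0) -> pivot_prod x m != 0.
Proof.
elim: m => [|m IH] h; first by rewrite /pivot_prod big_ord0 oner_neq0.
rewrite pivot_prodS mulf_neq0 ?h //; apply: IH => j hj; apply: h; lia.
Qed.

Lemma pivot_ev x j :
  pivot x j *: ev (d - j) = cM x (d - j) (d - j).+1 *: ev (d - j) :> 'cV[C]_d.
Proof. by rewrite /pivot; case: eqP => [->|] //; rewrite subn0 ev_out ?scaler0. Qed.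

Definition upcol x (c : 'I_d) : 'cV[C]_d := \col_(r < d) (if (r < c)%N then x.2 r c else 0).

Lemma skew_col_band x (c : 'I_d) : inV x ->
  (forall r c' : 'I_d, (c < c')%N -> (r.+1 < c')%N -> x.2 r c' = 0) ->
  x.2 *m ev c = upcol x c - cM x c.+1 c.+2 *: ev c.+1.
Proof.
move=> hx hc; apply/matrixP => r z; rewrite (ord1 z) mul_ev !mxE.
case: (ltngtP r c) => hrc.
- by rewrite (_ : (r == c.+1 :> nat) = false) ?mulr0 ?subr0 //; apply/negbTE/eqP; lia.
- rewrite (inV_entry hx c r); case: (eqVneq (r : nat) c.+1) => hr.
    by rewrite (_ : c.+2 = r.+1) ?cME ?mulr1 ?sub0r // hr.
  by rewrite hc ?mulr0 ?subr0 ?oppr0 //; lia.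
- have -> : r = c by apply: val_inj.
  rewrite inV_diag // (_ : (c == c.+1 :> nat) = false) ?mulr0 ?subr0 //.
  by apply/negbTE/eqP; lia.
Qed.

Lemma skew_col_Lband x i (hc : (d - i.+1 < d)%N) : (i.+1 < d)%N -> inV x -> Lband i.+1 x ->
  x.2 *m ev (d - i.+1) = upcol x (Ordinal hc) - pivot x i *: ev (d - i).
Proof.
move=> hid hx [_ hM]; rewrite pivot_ev (skew_col_band (c := Ordinal hc) hx) /=.
  by have -> : (d - i.+1).+1 = (d - i)%N by lia.
by move=> r c' /= hc' hr; apply: hM.
Qed.

Definition band_state x j (s : lstate C d) :=
  [/\ vprev s = (pivot_prod x j * tprev s) *: ev (d - j),
      nprev s = (pivot_prod x j * tprev s) ^+ 2
    & vcur s = (pivot_prod x j.+1 * tcur s) *: ev (d - j.+1)].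

Lemma lstep_band x j s w : band_state x j s -> (j.+1 < d)%N ->
  x.2 *m ev (d - j.+1) = w - pivot x j *: ev (d - j) ->
  lstep x.2 s = LState ((pivot_prod x j.+1 * tcur s) *: ev (d - j.+1)) (tcur s)
    ((pivot_prod x j.+1 * tcur s) ^+ 2)
    ((tcur s * (pivot_prod x j * tprev s) ^+ 2 * (pivot_prod x j.+1 * tcur s)) *: w)
    (tcur s ^+ 2 * (pivot_prod x j * tprev s) ^+ 2).
Proof.
case: s => a ta Na b tb [/= ha hNa hb] hj hM.
have hdj : (d - j.+1 < d)%N by lia.
rewrite /lstep /= hb hNa ha dotZl dotZr (dot_ev (Ordinal hdj)) mulr1.
congr LState; rewrite -scalemxAr hM !scalerA scalerBr scalerA.
rewrite [X in _ - X *: _ + _](_ : _ = ta * (pivot_prod x j.+1 * tb * (pivot_prod x j.+1 * tb))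
  * (pivot_prod x j * ta)) ?subrK //.
by rewrite pivot_prodS; ring.
Qed.

Lemma Lband_mono i i' x : (i <= i')%N -> Lband i' x -> Lband i x.
Proof. by move=> h [hv hM]; split=> // r c hc; apply: hM; lia. Qed.

Lemma upcol_Lband x i (hc : (d - i.+1 < d)%N) : (i.+1 < d)%N -> Lband i.+2 x ->
  upcol x (Ordinal hc) = pivot x i.+1 *: ev (d - i.+2).
Proof.
move=> hid [_ hM]; apply/matrixP => r z; rewrite (ord1 z) !mxE.
case: ltnP => /= hrc; last first.
  by rewrite (_ : (r == (d - i.+2)%N :> nat) = false) ?mulr0 //; apply/negbTE/eqP; lia.
have [hr|hr] := eqVneq (r : nat) (d - i.+2)%N; last by rewrite mulr0 hM //=; lia.
rewrite mulr1 /pivot /= -(cME x r (Ordinal hc)) hr.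
by congr (cM x _ _); lia.
Qed.

Lemma lanczos_band x i j : inV x -> Lband i x -> (j < i)%N -> (j.+1 < d)%N ->
  band_state x j (lanczos x.2 x.1 j).
Proof.
move=> hx hL; elim: j => [|j IH] hji hjd.
  have hd1 : (d.-1 < d)%N by lia.
  split => /=; first by rewrite subn0 ev_out ?scaler0.
    by rewrite /pivot_prod big_ord0 mul1r expr1n.
  rewrite /pivot_prod big_ord1 /pivot /= (cv_last x hd1) mulr1.
  apply/matrixP => r z; rewrite (ord1 z) !mxE.
  have [hr|hr] := eqVneq (r : nat) (d - 1)%N.
    by rewrite (_ : r = Ordinal hd1) ?mulr1 //; apply: val_inj; rewrite /= hr subn1.
  by rewrite mulr0 hL.1 //; move: hr (ltn_ord r); lia.
have hc : (d - j.+1 < d)%N by lia.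
have hcol := skew_col_Lband hc (ltnW hjd) hx (Lband_mono (ltnW hji) hL).
rewrite (upcol_Lband hc (ltnW hjd) (Lband_mono hji hL)) in hcol.
rewrite /lanczos iterS -/(lanczos x.2 x.1 j).
rewrite (lstep_band (IH (ltnW hji) (ltnW hjd)) (ltnW hjd) hcol).
split => //=; rewrite scalerA; congr (_ *: _).
by rewrite !pivot_prodS; ring.
Qed.

Lemma lanczos_scales_neq0 x i j : inV x -> Lband i x -> (i < d)%N ->
  (forall k, (k < d)%N -> pivot x k != 0) -> (j <= i)%N ->
  tprev (lanczos x.2 x.1 j) != 0 /\ tcur (lanczos x.2 x.1 j) != 0.
Proof.
move=> hx hL hid hp; elim: j => [|j IH] hji; first by rewrite /= oner_neq0.
have [htp htc] := IH (ltnW hji).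
have [_ hN _] := lanczos_band hx hL hji (leq_ltn_trans hji hid).
rewrite /lanczos iterS -/(lanczos x.2 x.1 j) /=; split => //.
rewrite hN !mulf_neq0 ?expf_neq0 // pivot_prod_neq0 // => k hk; apply: hp; lia.
Qed.

Lemma fnum1 x : fnum d 1 x = dot x.1 x.1.
Proof. by rewrite /fnum /lnum /= expr1n mulr1. Qed.

Lemma fden1 x : fden d 1 x = 1.
Proof. by rewrite /fden /lden /= expr1n mulr1. Qed.

Lemma fnum_Lband x i (hc : (d - i.+1 < d)%N) : inV x -> Lband i.+1 x -> (i.+1 < d)%N ->
  fnum d i.+2 x = fden d i.+2 x * dot (upcol x (Ordinal hc)) (upcol x (Ordinal hc)).
Proof.
move=> hx hL hid; rewrite /fnum /fden skew_upper_id //=.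
have I := lanczos_band hx hL (ltnSn i) hid.
by rewrite (lstep_band I hid (skew_col_Lband hc hid hx hL)) /lnum /lden /= dotZl dotZr; ring.
Qed.

Lemma fden_Lband_neq0 x i : inV x -> Lband i.+1 x -> (i.+1 < d)%N ->
  (forall k, (k < d)%N -> pivot x k != 0) -> fden d i.+2 x != 0.
Proof.
move=> hx hL hid hp; rewrite /fden skew_upper_id //= /lden /=.
have [htp htc] := lanczos_scales_neq0 hx hL hid hp (leqnSn i).
have [_ hN hb] := lanczos_band hx hL (ltnSn i) hid.
have hc : (d - i.+1 < d)%N by lia.
have hs m : (m <= i.+1)%N -> pivot_prod x m != 0.
  by move=> hm; apply: pivot_prod_neq0 => k hk; apply: hp; lia.
rewrite hN hb dotZl dotZr (dot_ev (Ordinal hc)) mulr1.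
by rewrite !mulf_neq0 ?expf_neq0 ?mulf_neq0 ?hs.
Qed.

Lemma sum_cv_sq x : \sum_(1 <= j < d.+1) cv x j ^+ 2 = dot x.1 x.1.
Proof. by rewrite big_add1 /= big_mkord /dot; apply: eq_bigr => j _; rewrite cvE expr2. Qed.

Lemma sum_cM_sq x c (hc : (c < d)%N) :
  \sum_(1 <= k < c.+1) cM x k c.+1 ^+ 2 = dot (upcol x (Ordinal hc)) (upcol x (Ordinal hc)).
Proof.
rewrite big_add1 /= big_mkord (big_ord_widen d (fun k => cM x k.+1 c.+1 ^+ 2) (ltnW hc)).
rewrite /dot big_mkcond /=; apply: eq_bigr => r _; rewrite !mxE /=.
by case: ifP => h; [rewrite -(cME x r (Ordinal hc)) expr2 | rewrite mulr0].
Qed.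

Lemma polymx_upcol (c : 'I_d) : polymx (fun x => upcol x c).
Proof.
move=> i j; apply: (@polyfun_ext _ (fun z => if (i < c)%N then z.2 i c else 0)).
  by move=> z; rewrite mxE.
by case: ltnP => h; [apply: pf_M | apply: pf_const].
Qed.

End Band.

Section Reach.
Variable d : nat.
Implicit Types (x : Vpt d).

Lemma Lband1_reach x : (0 < d)%N -> dot x.1 x.1 != 0 -> exists H, orth H /\ Lband 1 (act H x).
Proof.
move=> hd0 hn.
have hk : forall k : 'I_d, (d <= k)%N -> x.1 k 0 = 0 by move=> k; rewrite leqNgt ltn_ord.
have [H [lam [_ [HH [Hu _]]]]] := householder hd0 (leqnn d) hk hn.
exists H; split=> //; split=> [j hj|r c hc]; last by have := ltn_ord c; lia.
rewrite /act /= Hu !mxE.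
by rewrite (_ : (j == d.-1 :> nat) = false) ?mulr0 //; apply/negbTE/eqP; lia.
Qed.

(* With 0-based indices: a Householder reflection acting on the first d - i
   coordinates carries the part of column d - i above the diagonal to a
   multiple of e_(d-i-1) and leaves the later columns alone. *)
Lemma Lband_reach_step x i (hc : (d - i < d)%N) : Lband i x -> (i.+1 < d)%N ->
  dot (upcol x (Ordinal hc)) (upcol x (Ordinal hc)) != 0 ->
  exists H, orth H /\ Lband i.+1 (act H x).
Proof.
move=> [hv hM] hid hn; set c := Ordinal hc.
have hk : forall k : 'I_d, (c <= k)%N -> upcol x c k 0 = 0.
  by move=> k hk; rewrite mxE ltnNge hk.
have hc0 : (0 < c)%N by rewrite /=; lia.
have [H [lam [HT [HH [Hu Hd]]]]] := householder hc0 (ltnW hc) hk hn.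
exists H; split=> //; split=> [j hj|r c' hc' hr].
  rewrite /act /= (mul_id_tail_mx Hd); first exact: hv.
  by move=> k hkc; apply: hv; rewrite /= in hkc; lia.
have hcc : (c <= c')%N by rewrite /=; lia.
rewrite /act /= HT (mul_mx_id_tail (H *m x.2) r Hd hcc) mxE.
have Hr0 : forall k : 'I_d, (c <= k)%N -> (r < k)%N -> H r k = 0.
  by move=> k hck hrk; rewrite Hd // (_ : r == k = false) //; apply/negbTE/eqP => e; move: hrk; rewrite e ltnn.
case: (ltngtP c c') => hcc'; last 2 first.
- by move: hcc hcc'; lia.
- have -> : c' = c by apply: val_inj.
  rewrite (eq_bigr (fun k => H r k * upcol x c k 0)) => [|k _].
    have := congr1 (fun M : 'cV[C]_d => M r 0) Hu; rewrite !mxE => ->.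
    by rewrite (_ : (r == c.-1 :> nat) = false) ?mulr0 //; apply/negbTE/eqP; lia.
  by rewrite mxE; case: ltnP => hkc //; rewrite Hr0 ?mul0r //; lia.
apply: big1 => k _; case: (ltnP k.+1 c') => hk1; first by rewrite hM ?mulr0 //; lia.
by rewrite Hr0 ?mul0r //; lia.
Qed.

End Reach.

Section Stabilizer.
Variables (d : nat) (A : 'M[C]_d).
Hypotheses (hd : (0 < d)%N) (hA : orth A)
  (hAL : forall x, inV x -> Lband (d - 1) x -> Lband (d - 1) (act A x)).

Definition monocol (j : 'I_d) := forall r, r != j -> A r j = 0.

Lemma monocol_dot (i j : 'I_d) : monocol j -> \sum_l A l i * A l j = A j i * A j j.
Proof. by move=> hj; rewrite (bigD1 j) //= big1 ?addr0 // => l hl; rewrite hj // mulr0. Qed.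

Lemma monocol_sq j : monocol j -> A j j ^+ 2 = 1.
Proof. by move=> hj; rewrite expr2 -monocol_dot // orth_col_dot ?orthT ?eqxx. Qed.

Lemma monocol_diag_neq0 j : monocol j -> A j j != 0.
Proof. by move=> /monocol_sq; apply: contra_eqN => /eqP ->; rewrite expr0n eq_sym oner_eq0. Qed.

Let hd1 : (d - 1 < d)%N. Proof. lia. Qed.

Lemma monocol_last : monocol (Ordinal hd1).
Proof.
move=> r hr.
have hx0 : inV (ev (d - 1), 0 : 'M[C]_d) by apply: inV_entryP => i j; rewrite !mxE oppr0.
have hL0 : Lband (d - 1) (ev (d - 1), 0 : 'M[C]_d).
  split=> [j hj|r' c hc hr']; last by rewrite mxE.
  by rewrite mxE (_ : (j == (d - 1)%N :> nat) = false) //; apply/negbTE/eqP; lia.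
have [hv _] := hAL hx0 hL0; rewrite -(mul_ev A (Ordinal hd1) r); apply: hv.
have hr' : (r : nat) != (d - 1)%N := hr.
by move: hr' (ltn_ord r); lia.
Qed.

(* For r < j the test point (0, E_(j,j+1) - E_(j+1,j)) of L^(d-1) forces
   A_(r,j) A_(j+1,j+1) = 0; for r > j column j is orthogonal to column r. *)
Lemma monocol_step (j : 'I_d) : (j.+1 < d)%N ->
  (forall k : 'I_d, (j < k)%N -> monocol k) -> monocol j.
Proof.
move=> hj hk r hr; case: (ltngtP r j) => hrj; last first.
- by move: hr; rewrite (_ : r = j) ?eqxx //; apply: val_inj.
- have hrr := hk r hrj; have /eqP := orth_col_dot j r (orthT hA).
  rewrite monocol_dot // (_ : (j == r) = false) ?mulf_eq0 ?(negbTE (monocol_diag_neq0 hrr)).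
    by rewrite orbF => /eqP.
  by apply/negbTE/eqP => e; move: hrj; rewrite e ltnn.
pose k := Ordinal hj; have hkk : monocol k by apply: hk => /=.
pose D := delta_mx j k - delta_mx k j : 'M[C]_d.
have hxD : inV (0, D).
  by apply: inV_entryP => a b; rewrite !mxE opprB (andbC (b == j)) (andbC (b == k)).
have hLD : Lband (d - 1) (0, D).
  split=> [jj _|a c _ hac]; first by rewrite mxE.
  have ne (a' c' : 'I_d) : (c' <= a'.+1)%N -> (a == a') && (c == c') = false.
    by move=> hca; apply/negbTE/andP => -[/eqP e1 /eqP e2]; move: hac; rewrite e1 e2; lia.
  by rewrite !mxE !ne ?subrr // /k /=; lia.
have [_ hM] := hAL hxD hLD.
have h1 : (d - (d - 1) < k)%N by rewrite /=; lia.
have h2 : (r.+1 < k)%N by rewrite /=; lia.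
have := hM r k h1 h2.
have subE (X Y : 'M[C]_d) : (X - Y) r k = X r k - Y r k by rewrite !mxE.
rewrite /act /= /D mulmxBr mulmxBl subE !conj_delta_mx (hkk r); last first.
  by apply/eqP => e; move: hrj; rewrite e /=; lia.
by rewrite mul0r subr0 => /eqP; rewrite mulf_eq0 (negbTE (monocol_diag_neq0 hkk)) orbF => /eqP.
Qed.

Lemma Lband_stabilizer_inW : inW A.
Proof.
have mono : forall t (j : 'I_d), (d - 1 - t <= j)%N -> monocol j.
  elim=> [|t IH] j hj.
    rewrite (_ : j = Ordinal hd1); first exact: monocol_last.
    by apply: val_inj => /=; move: (ltn_ord j) hj; lia.
  case: (leqP (d - 1 - t) j) => hjt; first exact: IH.
  apply: monocol_step => [|k hk]; first by lia.
  by apply: IH; lia.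
have {}mono j : monocol j by apply: (mono d); lia.
split=> [i j hij|i]; first exact: mono.
by have /eqP := monocol_sq (mono i); rewrite sqrf_eq1 => /orP [/eqP->|/eqP->]; [left | right].
Qed.

End Stabilizer.

Section Signs.
Variable d : nat.
Implicit Types (x : Vpt d) (B : 'M[C]_d).

Lemma inW_tr B : inW B -> inW B^T.
Proof. by move=> [h1 h2]; split=> [i j hij|i]; rewrite mxE; [apply: h1; rewrite eq_sym | apply: h2]. Qed.

Lemma inW_mull B m (X : 'M[C]_(d, m)) i j : inW B -> (B *m X) i j = B i i * X i j.
Proof.
move=> [hB _]; rewrite mxE (bigD1 i) //= big1 ?addr0 // => k hk.
by rewrite hB 1?eq_sym // mul0r.
Qed.

Lemma inW_mulr B (X : 'M[C]_d) i j : inW B -> (X *m B^T) i j = X i j * B j j.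
Proof.
move=> [hB _]; rewrite mxE (bigD1 j) //= big1 ?addr0 ?mxE // => k hk.
by rewrite mxE hB 1?eq_sym // mulr0.
Qed.

Lemma Lband_inW B i x : inW B -> Lband i x -> Lband i (act B x).
Proof.
move=> hB [hv hM]; split=> [j hj|r c hc hr]; rewrite /act /=.
  by rewrite inW_mull // hv // mulr0.
by rewrite inW_mulr // inW_mull // hM // mulr0 mul0r.
Qed.

End Signs.

Section Main.
Variable d : nat.
Hypothesis hd : (2 <= d)%N.
Implicit Types (x : Vpt d) (A : 'M[C]_d).

Definition base_pt : Vpt d :=
  (ev (d - 1), \matrix_(r, c) (if r.+1 == c then 1 else if c.+1 == r then -1 else 0)).

Lemma base_pt_inV : inV base_pt.
Proof.
apply: inV_entryP => i j; rewrite /= !mxE.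
case: (eqVneq j.+1 (i : nat)) => h1; case: (eqVneq i.+1 (j : nat)) => h2 //=.
- by move: h1 h2; lia.
- by rewrite opprK.
- by rewrite oppr0.
Qed.

Lemma base_pt_Lband i : Lband i base_pt.
Proof.
split=> [j hj|r c hc hr]; rewrite /= !mxE.
  by rewrite (_ : (j == (d - 1)%N :> nat) = false) //; apply/negbTE/eqP; lia.
rewrite (_ : (r.+1 == c) = false); last by apply/negbTE/eqP; lia.
by rewrite (_ : (c.+1 == r) = false) //; apply/negbTE/eqP; lia.
Qed.

Lemma base_pt_pivot j : (j < d)%N -> pivot base_pt j = 1.
Proof.
move=> hj; rewrite /pivot; case: eqP => [hj0|hj0].
  have hd1 : (d.-1 < d)%N by lia.
  by rewrite cv_last !mxE /= (_ : (d.-1 == (d - 1)%N :> nat) = true) //; apply/eqP; lia.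
have h1 : (d - j.+1 < d)%N by lia.
have h2 : (d - j < d)%N by lia.
have e1 : (d - j.+1).+1 = (d - j)%N by lia.
by have := cME base_pt (Ordinal h1) (Ordinal h2); rewrite /= e1 => ->; rewrite mxE /= e1 eqxx.
Qed.

Lemma base_pt_upcol c (h : (0 < c)%N) (hc : (c < d)%N) : upcol base_pt (Ordinal hc) = ev c.-1.
Proof.
apply/matrixP => r z; rewrite (ord1 z) !mxE /=.
case: ltnP => hrc; last by rewrite (_ : (r == c.-1 :> nat) = false) //; apply/negbTE/eqP; lia.
case: (eqVneq (r : nat) c.-1) => hr; first by rewrite (_ : r.+1 == c) //; apply/eqP; lia.
rewrite (_ : r.+1 == c = false); last by apply/negbTE/eqP; lia.
by rewrite (_ : c.+1 == r = false) //; apply/negbTE/eqP; lia.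
Qed.

Lemma base_pt_f k : (1 <= k <= d)%N ->
  fden d k base_pt != 0 /\ fnum d k base_pt = fden d k base_pt.
Proof.
case: k => [//|[|i]] hk.
  have hd1 : (d - 1 < d)%N by lia.
  by rewrite fnum1 fden1 oner_neq0 (dot_ev (Ordinal hd1)).
have hid : (i.+1 < d)%N by lia.
split; first by apply: fden_Lband_neq0 base_pt_inV (base_pt_Lband _) hid _ => j hj;
  rewrite base_pt_pivot ?oner_neq0.
have hc : (d - i.+1 < d)%N by lia.
have hc1 : ((d - i.+1).-1 < d)%N by lia.
rewrite (fnum_Lband hc base_pt_inV (base_pt_Lband _) hid) base_pt_upcol; last by lia.
by rewrite (dot_ev (Ordinal hc1)) mulr1.
Qed.

Lemma ratrep_f k : (1 <= k <= d)%N -> ratrep (fnum d k) (fden d k).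
Proof.
move=> hk; split; first exact: polyfun_fnum.
split; first exact: polyfun_fden.
by exists base_pt; split; [exact: base_pt_inV | have [] := base_pt_f hk].
Qed.

Lemma rat_invariant_f k : rat_invariant (fnum d k) (fden d k).
Proof. by move=> A hA x hx; rewrite fnum_act ?fden_act. Qed.

Lemma rat_val_f_act k A x y : orth A -> inV x ->
  rat_val (fnum d k) (fden d k) x y -> rat_val (fnum d k) (fden d k) (act A x) y.
Proof.
move=> hA; apply: (rat_val_act hA) => z hz.
by rewrite fnum_act ?fden_act.
Qed.

(* p' - |upcol|^2 q' vanishes on L^(i+1) off the zero set of fden, and fden
   does not vanish at base_pt. *)
Lemma rat_val_Lband x i y (hc : (d - i.+1 < d)%N) : inV x -> Lband i.+1 x -> (i.+1 < d)%N ->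
  rat_val (fnum d i.+2) (fden d i.+2) x y ->
  y = dot (upcol x (Ordinal hc)) (upcol x (Ordinal hc)).
Proof.
move=> hx hL hid [p' [q' [[pp [pq _]] [heq [hq ->]]]]].
pose F z := dot (upcol z (Ordinal hc)) (upcol z (Ordinal hc)).
have pF : polyfun F by apply: polyfun_dot; apply: polymx_upcol.
suff /eqP : p' x - F x * q' x = 0 by rewrite subr_eq0 => /eqP ->; rewrite mulfK.
apply: (@polyfun_vanish_line_closed _ (fun z => inV z /\ Lband i.+1 z)
  (fun z => p' z - F z * q' z) (fden d i.+2) _ _ _ _ base_pt _ _ x (conj hx hL)).
- by move=> a b t [ha La] [hb Lb]; split; [apply: inV_line | apply: Lband_line].
- by apply: polyfun_sub => //; apply: pf_mul.
- exact: polyfun_fden.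
- move=> z [hz Lz] hQ; apply/eqP; rewrite subr_eq0; apply/eqP; apply: (mulfI hQ).
  by rewrite mulrA -(fnum_Lband hc hz Lz hid) heq // mulrC.
- by split; [apply: base_pt_inV | apply: base_pt_Lband].
- by have [] := base_pt_f (k := i.+2) ltac:(lia).
Qed.

Lemma f_on_L i : (2 <= i <= d)%N ->
  (exists x, inV x /\ Lsp i.-1 x /\ in_dom (fnum d i) (fden d i) x) /\
  (forall x y, inV x -> Lsp i.-1 x -> rat_val (fnum d i) (fden d i) x y ->
     y = \sum_(1 <= k < (d - i + 1).+1) cM x k (d - i + 2) ^+ 2).
Proof.
case: i => [|[|i]] // /andP [_ hid].
have hL x : Lsp i.+1 x <-> Lband i.+1 x by apply: Lsp_Lband; lia.
have hc : (d - i.+1 < d)%N by lia.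
split.
  exists base_pt; split; first exact: base_pt_inV.
  split; first by apply/hL; apply: base_pt_Lband.
  have [hq _] := base_pt_f (k := i.+2) ltac:(lia).
  by exists (fnum d i.+2 base_pt / fden d i.+2 base_pt); apply: rat_val_self => //; apply: ratrep_f.
move=> x y hx /hL hLx hv; rewrite (rat_val_Lband hc hx hLx hid hv).
have -> : (d - i.+2 + 1)%N = (d - i.+1)%N by lia.
have -> : (d - i.+2 + 2)%N = (d - i.+1).+1 by lia.
by rewrite sum_cM_sq.
Qed.

Definition Ud x := inV x /\ exists y : nat -> C,
  (forall k, (1 <= k <= d)%N -> rat_val (fnum d k) (fden d k) x (y k)) /\
  \prod_(1 <= k < d.+1) y k != 0.

Lemma Ud_base : Ud base_pt.
Proof.
split; first exact: base_pt_inV.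
exists (fun k => fnum d k base_pt / fden d k base_pt); split.
  by move=> k hk; have [hq _] := base_pt_f hk; apply: rat_val_self => //; apply: ratrep_f.
apply/prod_index_iota_neq0 => k; rewrite ltnS => hk.
by have [hq ->] := base_pt_f hk; rewrite divff // oner_neq0.
Qed.

Lemma Ud_invariant : O_invariant Ud.
Proof.
move=> A x hA hx [_ [y [hy hp]]]; split; first exact: inV_act.
by exists y; split => // k hk; apply: rat_val_f_act (hy k hk).
Qed.

Definition f_reps (p q : nat -> Vpt d -> C) := forall k, (1 <= k <= d)%N ->
  ratrep (p k) (q k) /\ rateq (fnum d k) (fden d k) (p k) (q k).

Lemma Ud_reps x : inV x ->
  Ud x <-> exists p q, f_reps p q /\ \prod_(1 <= k < d.+1) (p k x * q k x) != 0.
Proof.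
move=> hx; split; last first.
  move=> [p [q [hpq /prod_index_iota_neq0 hne]]]; split => //.
  have hne' k : (1 <= k <= d)%N -> p k x != 0 /\ q k x != 0.
    by move=> hk; have := hne k hk; rewrite mulf_eq0 negb_or => /andP.
  exists (fun k => p k x / q k x); split.
    move=> k hk; have [hr he] := hpq k hk; have [_ hq] := hne' k hk.
    by exists (p k), (q k).
  apply/prod_index_iota_neq0 => k hk; have [hp hq] := hne' k hk.
  by rewrite mulf_neq0 ?invr_eq0.
move=> [_ [y [hy /prod_index_iota_neq0 hy0]]].
pose R k (pq : (Vpt d -> C) * (Vpt d -> C)) := (0 < k)%N ->
  [/\ ratrep pq.1 pq.2, rateq (fnum d k) (fden d k) pq.1 pq.2, pq.2 x != 0 & y k = pq.1 x / pq.2 x].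
have [pq hpq] : exists pq, forall k, (k < d.+1)%N -> R k (pq k).
  apply: (nat_choice (fun _ => 0, fun _ => 0)) => k hkd.
  case: (posnP k) => [->|hk1]; first by exists (fun _ => 0, fun _ => 0).
  have hk : (1 <= k <= d)%N by apply/andP.
  by have [p [q [hr [he [hq hyk]]]]] := hy k hk; exists (p, q).
exists (fun k => (pq k).1), (fun k => (pq k).2); split.
  by move=> k /andP [hk1 hkd]; have [] := hpq k hkd hk1.
apply/prod_index_iota_neq0 => k /andP [hk1 hkd]; have [_ _ hq hyk] := hpq k hkd hk1.
have hk : (1 <= k <= d)%N by apply/andP.
rewrite mulf_neq0 //; apply: contraNneq (hy0 k hk) => hp.
by rewrite hyk hp mul0r.
Qed.

Lemma Ud_open : zariski_open Ud.
Proof.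
exists (fun h => exists p q, f_reps p q /\ h = fun x => \prod_(1 <= k < d.+1) (p k x * q k x)).
split.
  move=> h [p [q [hpq ->]]]; apply: polyfun_prod => k; rewrite mem_index_iota => hk.
  by have [[hp [hq _]] _] := hpq k hk; apply: pf_mul.
move=> x hx; rewrite Ud_reps //; split.
  move=> [p [q [hpq hne]]].
  by exists (fun x => \prod_(1 <= k < d.+1) (p k x * q k x)); split => //; exists p, q.
by move=> [h [[p [q [hpq ->]]] hne]]; exists p, q.
Qed.

Lemma Ud_reach x : Ud x -> exists A, orth A /\ Lband (d - 1) (act A x).
Proof.
move=> [hx [y [hy /prod_index_iota_neq0 hy0]]].
suff : forall i, (1 <= i < d)%N -> exists A, orth A /\ Lband i (act A x) by apply; lia.
elim=> [//|i IH] /andP [_ hid]; case: i IH hid => [|i] IH hid.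
  have h1 : (1 <= 1 <= d)%N by lia.
  apply: Lband1_reach; first by lia.
  by move: (hy0 1%N h1); rewrite (rat_valE (hy 1%N h1)) // fden1 ?oner_neq0 // fnum1 divr1.
have [A [hA hL]] := IH (ltnW hid).
have hc : (d - i.+1 < d)%N by lia.
have hk : (1 <= i.+2 <= d)%N by lia.
have hv := rat_val_f_act hA hx (hy i.+2 hk).
have := hy0 _ hk; rewrite (rat_val_Lband hc (inV_act A hx) hL (ltnW hid) hv).
move=> /(Lband_reach_step hL hid) [H [hH hL']].
by exists (H *m A); split; [apply: orth_mul | rewrite act_mul].
Qed.

Lemma relative_section_Ud : relative_section Ud (fun x => inV x /\ Lsp (d - 1) x) (@inW d).
Proof.
have hLd x : Lsp (d - 1) x <-> Lband (d - 1) x by apply: Lsp_Lband; lia.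
split.
  move=> x hx hU; have := hU 1%:M orth1; rewrite act1 => /Ud_reach [A [hA hL]].
  by exists A; split => //; split; [apply: inV_act | apply/hLd].
move=> A hA; split.
  move=> [hS _]; apply: Lband_stabilizer_inW hA _ => [|x hx hL]; first by lia.
  by have [_ /hLd] := hS x hx (conj hx (proj2 (hLd x) hL)).
move=> hW; split.
  by move=> x hx [_ /hLd hL]; split; [apply: inV_act | apply/hLd; apply: Lband_inW].
move=> y hy [_ /hLd hL]; exists (act A^T y); split; first exact: inV_act.
split; first by split; [apply: inV_act | apply/hLd; apply: Lband_inW => //; apply: inW_tr].
exact: act_orthKV.
Qed.

Lemma f1_rateq :
  rateq (fnum d 1) (fden d 1) (fun x => \sum_(1 <= j < d.+1) cv x j ^+ 2) (fun _ => 1).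
Proof. by move=> x _; rewrite fnum1 fden1 sum_cv_sq !mulr1. Qed.

End Main.

Theorem proposition3p6 (d : nat) (hd : (2 <= d)%N) :
  exists p q : nat -> Vpt d -> C,
    (forall k, (1 <= k <= d)%N -> ratrep (p k) (q k) /\ rat_invariant (p k) (q k)) /\
    let U := fun x : Vpt d => inV x /\
      exists y : nat -> C, (forall k, (1 <= k <= d)%N -> rat_val (p k) (q k) x (y k)) /\
        \prod_(1 <= k < d.+1) y k != 0 in
    [/\ zariski_open U, (exists x, U x), O_invariant U,
        relative_section U (fun x => inV x /\ Lsp (d - 1) x) (@inW d) &
        [/\ rateq (p 1%N) (q 1%N) (fun x => \sum_(1 <= j < d.+1) cv x j ^+ 2) (fun _ => 1),
            (forall i, (2 <= i < d)%N ->
               (exists x, inV x /\ Lsp i.-1 x /\ in_dom (p i) (q i) x) /\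
               (forall x y, inV x -> Lsp i.-1 x -> rat_val (p i) (q i) x y ->
                  y = \sum_(1 <= k < (d - i + 1).+1) cM x k (d - i + 2) ^+ 2)) &
            (exists x, inV x /\ Lsp (d - 1) x /\ in_dom (p d) (q d) x) /\
            (forall x y, inV x -> Lsp (d - 1) x -> rat_val (p d) (q d) x y ->
                  y = cM x 1 2 ^+ 2)]].
Proof.
exists (fnum d), (fden d); split.
  by move=> k hk; split; [exact: ratrep_f | exact: rat_invariant_f].
split; [exact: Ud_open | by exists (base_pt d); exact: Ud_base | exact: Ud_invariant
  | exact: relative_section_Ud | split].
- exact: f1_rateq.
- by move=> i /andP [hi hid]; apply: f_on_L; rewrite // hi ltnW.
- have [hdom hval] := f_on_L hd (i := d) ltac:(lia).
  rewrite -subn1 in hdom hval; split => // x y hx hL hv.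
  by rewrite (hval x y hx hL hv) subnn big_nat1.
Qed.
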